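(* Consider the multivariate linear model ${\bf y}_i={B^*}^T{\bf x}_i+\boldsymbol\epsilon_i$, $i=1,\dots,n$, with fixed design $X=({\bf x}_1,\dots,{\bf x}_n)^T\in\mathbb{R}^{n\times p}$, $n>p$, $X^TX$ invertible, unknown $B^*=(\boldsymbol\beta^*_1,\dots,\boldsymbol\beta^*_r)\in\mathbb{R}^{p\times r}$, and errors $\boldsymbol\epsilon_i=(\epsilon_{i1},\dots,\epsilon_{ir})^T$ i.i.d. over $i$ with mean zero, $E(\epsilon_{ic}^2)=1$ for all $i,c$, and $E(\epsilon_{ic}\epsilon_{ik})=\rho$ for $c\neq k$, where $\rho\in(0,1)$. Fix a partition $D=(D_1,\dots,D_Q)$ of $\{1,\dots,r\}$. Let $\dot B=(\dot{\boldsymbol\beta}_1,\dots,\dot{\boldsymbol\beta}_r)$ with $\dot{\boldsymbol\beta}_c=(X^TX)^{-1}X^T{\bf y}_c$ be the OLS estimates, and for $\gamma\ge0$ let $\bar B=\bar B(\gamma)$ be the minimizer over $B\in\mathbb{R}^{p\times r}$ of $$\frac{1}{2n}\sum_{i=1}^n\sum_{c=1}^r (y_{ic}-{\bf x}_i^T\boldsymbol\beta_c)^2+\frac{\gamma}{2n}\sum_{q=1}^Q\frac{1}{|D_q|}\sum_{l,m\in D_q}\|X(\boldsymbol\beta_l-\boldsymbol\beta_m)\|_2^2$$ (lasso parameter $\delta=0$). Then, for fixed $n$ and $p$, there exists $\gamma>0$ such that $$E\left(\|\bar B-B^*\|_2^2\right)\le E\left(\|\dot B-B^*\|_2^2\r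ight).$$
   Context: ${\bf y}_c\in\mathbb{R}^n$ is the $c$th column of $Y=({\bf y}_1,\dots,{\bf y}_n)^T\in\mathbb{R}^{n\times r}$ (response vectors ${\bf y}_i\in\mathbb{R}^r$ as rows), $y_{ic}$ its $(i,c)$ entry. For a matrix, $\|\cdot\|_2$ denotes the entrywise $L_2$ norm. The inner sum $\sum_{l,m\in D_q}$ runs over all ordered pairs $(l,m)$ in $D_q$. Expectations are over the errors. It is not assumed that responses in the same cluster have equal coefficients. *)

From HB Require Import structures.
From mathcomp Require Import all_boot all_order all_algebra.
From mathcomp Require Import all_classical all_reals.
From mathcomp Require Import measure lebesgue_measure lebesgue_integral probability.
Set Implicit Arguments. Unset Strict Implicit. Unset Printing Implicit Defensive.
Import Order.TTheory GRing.Theory Num.Theory.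
Local Open Scope ring_scope.
Local Open Scope classical_set_scope.

Definition sqnorm {R : realType} {m k : nat} (A : 'M[R]_(m, k)) : R :=
  \sum_(i < m) \sum_(j < k) A i j ^+ 2.

Definition ols {R : realType} {n p r : nat} (X : 'M[R]_(n, p)) (Y : 'M[R]_(n, r))
  : 'M[R]_(p, r) := invmx (X^T *m X) *m (X^T *m Y).

Definition objective {R : realType} {n p r : nat} (D : {set {set 'I_r}})
  (gamma : R) (X : 'M[R]_(n, p)) (Y : 'M[R]_(n, r)) (B : 'M[R]_(p, r)) : R :=
  (2 * n%:R)^-1 * (\sum_(i < n) \sum_(c < r) (Y i c - (X *m B) i c) ^+ 2)
  + gamma / (2 * n%:R) *
    \sum_(S in D) (#|S|%:R)^-1 *
      \sum_(l in S) \sum_(m in S) \sum_(i < n) ((X *m B) i l - (X *m B) i m) ^+ 2.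

Definition is_minimizer {R : realType} {n p r : nat} (D : {set {set 'I_r}})
  (gamma : R) (X : 'M[R]_(n, p)) (Y : 'M[R]_(n, r)) (Bbar : 'M[R]_(p, r)) : Prop :=
  forall B : 'M[R]_(p, r), objective D gamma X Y Bbar <= objective D gamma X Y B.

(* Mutual independence of the rows eps_1, ..., eps_n (random vectors in R^r),
   stated as the product rule on measurable rectangles (a generating pi-system);
   sub-families are covered by taking A i c = setT. *)
Definition rows_independent {d} {T : measurableType d} {R : realType}
  (P : probability T R) {n r : nat} (eps : 'I_n -> 'I_r -> T -> R) : Prop :=
  forall A : 'I_n -> 'I_r -> set R, (forall i c, measurable (A i c)) ->
    P (\bigcap_(i in [set: 'I_n]) \bigcap_(c in [set: 'I_r]) (eps i c @^-1` A i c))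
    = (\prod_(i < n) P (\bigcap_(c in [set: 'I_r]) (eps i c @^-1` A i c)))%E.

Definition rows_identically_distributed {d} {T : measurableType d} {R : realType}
  (P : probability T R) {n r : nat} (eps : 'I_n -> 'I_r -> T -> R) : Prop :=
  forall (i j : 'I_n) (A : 'I_r -> set R), (forall c, measurable (A c)) ->
    P (\bigcap_(c in [set: 'I_r]) (eps i c @^-1` A c))
    = P (\bigcap_(c in [set: 'I_r]) (eps j c @^-1` A c)).

From HB Require Import structures.
From mathcomp Require Import all_boot all_order all_algebra.
From mathcomp Require Import all_classical all_reals.
From mathcomp Require Import measure lebesgue_measure lebesgue_integral probability.
From mathcomp Require Import measurable_realfun hoelder exp.
From mathcomp Require Import ring lra.
Import Order.TTheory GRing.Theory Num.Theory.
Local Open Scope ring_scope.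

(* With G the matrix averaging over the blocks of D and K = I - G, the penalty
   equals 2 ||X B K||^2 and K is an orthogonal projection.  The objective is
   therefore minimised exactly by the OLS estimate shrunk along K,
   Bbar = Bdot (I - t K) with t = 2 gamma / (1 + 2 gamma).  Writing
   Bdot - B* = M E with M = (X^T X)^-1 X^T, the cross term between M E K and
   B* K has mean zero, so
     E ||Bbar - B*||^2 - E ||Bdot - B*||^2 = t^2 ||B* K||^2 - (2t - t^2) E ||M E K||^2.
   Because rho < 1 the noise covariance is nondegenerate and E ||M E K||^2 > 0
   whenever B* K <> 0, so a small enough gamma makes the difference nonpositive. *)

Section frobenius.
Context {R : realType} {m k : nat}.
Implicit Types A B C : 'M[R]_(m, k).

Definition mxdot A B : R := \sum_i \sum_j A i j * B i j.

Lemma sqnorm_mxdot A : sqnorm A = mxdot A A.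
Proof. by apply: eq_bigr => i _; apply: eq_bigr => j _; rewrite expr2. Qed.

Lemma mxdotC A B : mxdot A B = mxdot B A.
Proof. by apply: eq_bigr => i _; apply: eq_bigr => j _; rewrite mulrC. Qed.

Lemma mxdotDl A B C : mxdot (A + B) C = mxdot A C + mxdot B C.
Proof.
rewrite /mxdot -big_split; apply: eq_bigr => i _.
by rewrite -big_split; apply: eq_bigr => j _; rewrite mxE mulrDl.
Qed.

Lemma mxdotZl a A B : mxdot (a *: A) B = a * mxdot A B.
Proof.
rewrite /mxdot mulr_sumr; apply: eq_bigr => i _.
by rewrite mulr_sumr; apply: eq_bigr => j _; rewrite mxE mulrA.
Qed.

Lemma mxdotBl A B C : mxdot (A - B) C = mxdot A C - mxdot B C.
Proof. by rewrite mxdotDl -scaleN1r mxdotZl mulN1r. Qed.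

Lemma mxdotDr A B C : mxdot C (A + B) = mxdot C A + mxdot C B.
Proof. by rewrite mxdotC mxdotDl !(mxdotC C). Qed.

Lemma mxdotZr a A B : mxdot A (a *: B) = a * mxdot A B.
Proof. by rewrite mxdotC mxdotZl mxdotC. Qed.

Lemma mxdotBr A B C : mxdot C (A - B) = mxdot C A - mxdot C B.
Proof. by rewrite mxdotC mxdotBl !(mxdotC C). Qed.

Lemma mxdot_trace A B : mxdot A B = \tr (A^T *m B).
Proof.
rewrite /mxdot /mxtrace exchange_big; apply: eq_bigr => j _.
by rewrite mxE; apply: eq_bigr => i _; rewrite mxE.
Qed.

Lemma sqnormD A B : sqnorm (A + B) = sqnorm A + 2 * mxdot A B + sqnorm B.
Proof. by rewrite !sqnorm_mxdot mxdotDl !mxdotDr (mxdotC B A); ring. Qed.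

Lemma sqnormB A B : sqnorm (A - B) = sqnorm A - 2 * mxdot A B + sqnorm B.
Proof. by rewrite !sqnorm_mxdot mxdotBl !mxdotBr (mxdotC B A); ring. Qed.

Lemma sqnorm_ge0 A : 0 <= sqnorm A.
Proof. by do 2![apply: sumr_ge0 => ? _]; exact: sqr_ge0. Qed.

Lemma sqnorm_eq0 A : (sqnorm A == 0) = (A == 0).
Proof.
apply/idP/eqP => [A0|->]; last first.
  by rewrite /sqnorm big1 // => i _; rewrite big1 // => j _; rewrite mxE expr0n.
have rows0 := psumr_eq0P (fun i _ => sumr_ge0 _ (fun j _ => sqr_ge0 (A i j))) (eqP A0).
apply/matrixP => i j; rewrite mxE; apply/eqP; rewrite -sqrf_eq0; apply/eqP.
exact: psumr_eq0P (fun j _ => sqr_ge0 (A i j)) (rows0 i isT) j isT.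
Qed.

Lemma sqnorm_gt0 A : A != 0 -> 0 < sqnorm A.
Proof. by rewrite lt_def sqnorm_eq0 sqnorm_ge0 andbT. Qed.

End frobenius.

Lemma mxdot_mulmxl {R : realType} {m m' k} (F : 'M[R]_(m, m')) A (B : 'M[R]_(m, k)) :
  mxdot (F *m A) B = mxdot A (F^T *m B).
Proof. by rewrite !mxdot_trace trmx_mul mulmxA. Qed.

Lemma mxdot_mulmxr {R : realType} {m k k'} A (G : 'M[R]_(k, k')) (B : 'M[R]_(m, k')) :
  mxdot (A *m G) B = mxdot A (B *m G^T).
Proof. by rewrite !mxdot_trace trmx_mul -mulmxA mxtrace_mulC mulmxA. Qed.

Lemma sqnorm_shrink_err {R : realType} {p r : nat} (C O : 'M[R]_(p, r)) (K : 'M[R]_r) t :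
  K^T = K -> K *m K = K ->
  sqnorm ((C + O) *m (1%:M - t *: K) - C) =
  sqnorm O - (2 * t - t ^+ 2) * sqnorm (O *m K)
  - (2 * t - 2 * t ^+ 2) * mxdot (O *m K) (C *m K) + t ^+ 2 * sqnorm (C *m K).
Proof.
move=> symK idemK.
have -> : (C + O) *m (1%:M - t *: K) - C = O - t *: (O *m K) - t *: (C *m K).
  rewrite mulmxBr mulmx1 -scalemxAr mulmxDl scalerDr.
  by apply/matrixP => i j; rewrite !mxE; ring.
have projK A : mxdot O (A *m K) = mxdot (O *m K) (A *m K).
  by rewrite [RHS]mxdot_mulmxr symK -mulmxA idemK.
rewrite !sqnorm_mxdot !mxdotBl !mxdotBr !mxdotZl !mxdotZr !projK (mxdotC (C *m K) O) projK.
rewrite (mxdotC (C *m K) (O *m K)) (mxdotC (O *m K) O) projK.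
ring.
Qed.

Definition block_mean_mx {R : realType} {r : nat} (D : {set {set 'I_r}}) : 'M[R]_r :=
  \matrix_(l < r, m < r) ((m \in finset.pblock D l)%:R / #|finset.pblock D l|%:R).

Definition block_center_mx {R : realType} {r : nat} (D : {set {set 'I_r}}) : 'M[R]_r :=
  1%:M - block_mean_mx D.

Section block_mean.
Context {R : realType} {r : nat} {D : {set {set 'I_r}}}.
Hypothesis partD : finset.partition D [set: 'I_r]%SET.
Local Notation G := (block_mean_mx D : 'M[R]_r).
Local Notation K := (block_center_mx D : 'M[R]_r).

Let trivD : finset.trivIset D. Proof. exact: finset.partition_trivIset partD. Qed.

Lemma mem_pblock_self l : l \in finset.pblock D l.
Proof. by rewrite finset.mem_pblock (finset.cover_partition partD) inE. Qed.

Lemma block_mean_mxC l m : G l m = G m l.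
Proof.
rewrite !mxE; have [lm|lm] := boolP (m \in finset.pblock D l).
  by rewrite (finset.same_pblock trivD lm) mem_pblock_self.
have [ml|_] := boolP (l \in finset.pblock D m); last by rewrite !mul0r.
by move: lm; rewrite (finset.same_pblock trivD ml) mem_pblock_self.
Qed.

Lemma block_mean_row_sum l : \sum_m G l m = 1.
Proof.
have pos : (0 < #|finset.pblock D l|)%N by apply/card_gt0P; exists l; exact: mem_pblock_self.
under eq_bigr do rewrite mxE.
rewrite -mulr_suml (eq_bigr (fun m => if m \in finset.pblock D l then 1 else 0)).
  by rewrite -big_mkcond /= sumr_const mulfV // pnatr_eq0 -lt0n.
by move=> m _; case: (_ \in _).
Qed.

Lemma trmx_block_mean : G^T = G.
Proof. by apply/matrixP => l m; rewrite mxE block_mean_mxC. Qed.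

Lemma block_mean_mx_idem : G *m G = G.
Proof.
apply/matrixP => l m; rewrite mxE.
transitivity (\sum_k G l k * G l m); last by rewrite -mulr_suml block_mean_row_sum mul1r.
apply: eq_bigr => k _; have [lk|lk] := boolP (k \in finset.pblock D l).
  by rewrite [G k m]mxE [G l m]mxE (finset.same_pblock trivD lk).
by rewrite [G l k]mxE (negbTE lk) !mul0r.
Qed.

Lemma trmx_block_center : K^T = K.
Proof. by rewrite linearB /= trmx1 trmx_block_mean. Qed.

Lemma block_center_mx_idem : K *m K = K.
Proof.
by rewrite mulmxBl !mulmxBr !mulmx1 mul1mx block_mean_mx_idem subrr subr0.
Qed.

Lemma penalty_block_mean (f : 'I_r -> 'I_r -> R) :
  \sum_(S in D) (#|S|%:R)^-1 * \sum_(l in S) \sum_(m in S) f l m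
  = \sum_l \sum_m G l m * f l m.
Proof.
transitivity (\sum_(S in D) \sum_(l in S)
    ((#|finset.pblock D l|%:R)^-1 * \sum_(m in finset.pblock D l) f l m)).
  apply: eq_bigr => S SD; rewrite mulr_sumr; apply: eq_bigr => l lS.
  by rewrite (finset.def_pblock trivD SD lS).
rewrite -(finset.set_partition_big _ partD) /=; apply: eq_big => [l|l _]; first by rewrite inE.
rewrite mulr_sumr big_mkcond /=; apply: eq_bigr => m _.
by rewrite mxE; case: (m \in _); rewrite ?mul0r // div1r.
Qed.

Lemma block_mean_sum_sqr (a : 'I_r -> R) :
  \sum_l \sum_m G l m * (a l - a m) ^+ 2
  = 2 * (\sum_l a l ^+ 2 - \sum_l \sum_m G l m * (a l * a m)).
Proof.
have col_sum m : \sum_l G l m = 1.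
  by under eq_bigr do rewrite block_mean_mxC; exact: block_mean_row_sum.
have sum_l2 : \sum_l \sum_m G l m * a l ^+ 2 = \sum_l a l ^+ 2.
  by apply: eq_bigr => l _; rewrite -mulr_suml block_mean_row_sum mul1r.
have sum_m2 : \sum_l \sum_m G l m * a m ^+ 2 = \sum_l a l ^+ 2.
  by rewrite exchange_big; apply: eq_bigr => m _; rewrite -mulr_suml col_sum mul1r.
transitivity (\sum_l \sum_m G l m * a l ^+ 2 + \sum_l \sum_m G l m * a m ^+ 2
              - 2 * \sum_l \sum_m G l m * (a l * a m)); last by rewrite sum_l2 sum_m2; ring.
rewrite mulr_sumr -big_split -sumrB /=; apply: eq_bigr => l _.
by rewrite mulr_sumr -big_split -sumrB /=; apply: eq_bigr => m _; ring.
Qed.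

Lemma penalty_block_center {n : nat} (U : 'M[R]_(n, r)) :
  \sum_(S in D) (#|S|%:R)^-1 *
      \sum_(l in S) \sum_(m in S) \sum_(i < n) (U i l - U i m) ^+ 2
  = 2 * sqnorm (U *m K).
Proof.
rewrite penalty_block_mean.
under eq_bigr do under eq_bigr do rewrite mulr_sumr.
under eq_bigr do rewrite exchange_big /=.
rewrite exchange_big /=.
under eq_bigr do rewrite block_mean_sum_sqr.
rewrite -mulr_sumr sumrB.
rewrite sqnorm_mxdot mxdot_mulmxr trmx_block_center -mulmxA block_center_mx_idem.
rewrite mulmxBr mulmx1 mxdotBr -sqnorm_mxdot.
congr (2 * (_ - _)); apply: eq_bigr => i _; apply: eq_bigr => l _.
rewrite mxE mulr_sumr; apply: eq_bigr => m _.
by rewrite block_mean_mxC; ring.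
Qed.

End block_mean.

Definition shrink_weight {R : realType} (g : R) : R := 2 * g / (1 + 2 * g).

Definition shrink_mx {R : realType} {r : nat} (D : {set {set 'I_r}}) (g : R) : 'M[R]_r :=
  1%:M - shrink_weight g *: block_center_mx D.

Lemma shrink_weight_ge0 {R : realType} {g : R} : 0 <= g -> 0 <= shrink_weight g.
Proof. by move=> g0; rewrite divr_ge0 ?mulr_ge0 //; lra. Qed.

Lemma shrink_weight_le1 {R : realType} {g : R} : 0 <= g -> shrink_weight g <= 1.
Proof. by move=> g0; rewrite ler_pdivrMr; lra. Qed.

Lemma shrink_weight_le {R : realType} {g : R} : 0 <= g -> shrink_weight g <= 2 * g.
Proof. by move=> g0; rewrite ler_pdivrMr; nra. Qed.

Lemma shrink_weightE {R : realType} {g : R} :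
  0 <= g -> shrink_weight g = 2 * g * (1 - shrink_weight g).
Proof. by move=> g0; rewrite /shrink_weight; field; rewrite gt_eqF //; lra. Qed.

Section minimizer.
Context {R : realType} {n p r : nat} {D : {set {set 'I_r}}}.
Context {X : 'M[R]_(n, p)} {Y : 'M[R]_(n, r)} {g : R}.
Hypothesis partD : finset.partition D [set: 'I_r]%SET.
Hypothesis XtX_unit : X^T *m X \in unitmx.
Hypothesis g_ge0 : 0 <= g.
Local Notation K := (block_center_mx D : 'M[R]_r).

Local Notation pen_rss B := (sqnorm (Y - X *m B) + 2 * g * sqnorm (X *m B *m K)).
Local Notation B0 := (ols X Y *m shrink_mx D g).

Lemma objectiveE B : objective D g X Y B = (2 * n%:R)^-1 * pen_rss B.
Proof.
rewrite /objective (penalty_block_center partD).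
have -> : \sum_i \sum_c (Y i c - (X *m B) i c) ^+ 2 = sqnorm (Y - X *m B).
  by apply: eq_bigr => i _; apply: eq_bigr => c _; rewrite !mxE.
ring.
Qed.

Lemma shrink_normal_eq : X^T *m (Y - X *m B0) = (2 * g) *: (X^T *m X *m B0 *m K).
Proof.
set W := X^T *m Y.
have XtXB0 : X^T *m X *m B0 = W - shrink_weight g *: (W *m K).
  by rewrite /ols !mulmxA mulmxV // mul1mx mulmxBr mulmx1 -scalemxAr.
rewrite mulmxBr [X^T *m (X *m _)]mulmxA XtXB0 -/W opprB addrC subrK.
rewrite mulmxBl -scalemxAl -[_ *m K *m K]mulmxA (block_center_mx_idem partD).
apply/matrixP => i j; rewrite !mxE {1}(shrink_weightE g_ge0); ring.
Qed.

Lemma pen_rss_shift H :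
  pen_rss (B0 + H) = pen_rss B0 + sqnorm (X *m H) + 2 * g * sqnorm (X *m H *m K).
Proof.
have cross_rss : mxdot (Y - X *m B0) (X *m H) = 2 * g * mxdot H (X^T *m X *m B0 *m K).
  by rewrite mxdotC mxdot_mulmxl shrink_normal_eq mxdotZr.
have cross_pen : mxdot (X *m B0 *m K) (X *m H *m K) = mxdot H (X^T *m X *m B0 *m K).
  rewrite mxdotC mxdot_mulmxr (trmx_block_center partD).
  by rewrite -[_ *m K *m K]mulmxA (block_center_mx_idem partD) mxdot_mulmxl !mulmxA.
rewrite mulmxDr opprD addrA (sqnormB (Y - X *m B0)) mulmxDl (sqnormD (X *m B0 *m K)).
rewrite cross_rss cross_pen; ring.
Qed.

Lemma is_minimizer_shrink Bbar : (0 < n)%N ->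
  is_minimizer D g X Y Bbar -> Bbar = ols X Y *m shrink_mx D g.
Proof.
move=> n_gt0 minB; have := minB B0.
rewrite !objectiveE ler_pM2l ?invr_gt0 ?mulr_gt0 ?ltr0n //.
have -> : Bbar = B0 + (Bbar - B0) by rewrite addrC subrK.
rewrite pen_rss_shift; set H := Bbar - B0 => le_shift.
have XH0 : X *m H = 0.
  apply/eqP; rewrite -sqnorm_eq0 eq_le sqnorm_ge0 andbT.
  have := mulr_ge0 (mulr_ge0 (ler0n R 2) g_ge0) (sqnorm_ge0 (X *m H *m K)).
  by move: le_shift; lra.
have H0 : H = 0.
  by apply: (can_inj (mulKmx XtX_unit)); rewrite mulmx0 -mulmxA XH0 mulmx0.
by rewrite H0 addr0.
Qed.

End minimizer.

Lemma ols_linear_model {R : realType} {n p r : nat} (X : 'M[R]_(n, p)) (B : 'M[R]_(p, r)) E :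
  X^T *m X \in unitmx -> ols X (X *m B + E) = B + invmx (X^T *m X) *m X^T *m E.
Proof.
move=> XtX_unit; rewrite /ols mulmxDr [X^T *m (X *m _)]mulmxA mulmxDr mulmxA.
by rewrite mulVmx // mul1mx mulmxA.
Qed.

Section independent_product.
Local Open Scope classical_set_scope.
Local Open Scope ereal_scope.
Context d (T : measurableType d) (R : realType) (P : probability T R).

Lemma expectation_mul_indep (X Y : {RV P >-> R}) :
  (forall A B, measurable A -> measurable B ->
     P (X @^-1` A `&` Y @^-1` B) = P (X @^-1` A) * P (Y @^-1` B)) ->
  (X : T -> R) \in Lfun P 1 -> (Y : T -> R) \in Lfun P 1 ->
  (fun w => X w * Y w)%R \in Lfun P 1 ->
  'E_P[fun w => (X w * Y w)%R] = 'E_P[X] * 'E_P[Y].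
Proof.
move=> indepXY /Lfun1_integrable iX /Lfun1_integrable iY /Lfun1_integrable iXY.
have mXY : measurable_fun setT (fun w => (X w, Y w)) by exact: measurable_fun_pair.
pose Z : {mfun T >-> (R * R)%type} :=
  HB.pack (fun w => (X w, Y w)) (isMeasurableFun.Build _ _ _ _ _ mXY).
pose muX := distribution P X; pose muY := distribution P Y.
(* The product rule on rectangles identifies the law of (X, Y) with muX \x muY. *)
have joint_law A : measurable A -> (muX \x muY) A = distribution P Z A.
  by apply: product_measure_unique => B C mB mC; rewrite -indepXY.
pose mul := fun z : (R * R)%type => (z.1 * z.2)%:E.
have mmul : measurable_fun [set: (R * R)%type] mul.
  by apply: measurableT_comp => //; exact: measurable_funM.
have iZ : (distribution P Z).-integrable setT mul by exact: integrable_pushforward.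
have iprod : (muX \x muY).-integrable setT mul.
  apply/integrableP; split => //.
  rewrite (eq_measure_integral (distribution P Z)); last by move=> A mA _; exact: joint_law.
  by move/integrableP : iZ => [].
have iXd : muX.-integrable setT EFin by exact: integrable_pushforward.
have iYd : muY.-integrable setT EFin by exact: integrable_pushforward.
have EY : \int[muY]_y y%:E = \int[P]_w (Y w)%:E by rewrite integral_distribution.
rewrite unlock.
transitivity (\int[distribution P Z]_z mul z); first by rewrite integral_distribution.
rewrite (eq_measure_integral (muX \x muY)); last by move=> A mA _; exact: esym (joint_law A mA).
rewrite -integral12_prod_meas1 // /fubini_F.
transitivity (\int[muX]_x (x%:E * \int[P]_w (Y w)%:E)).
  apply: eq_integral => x _; rewrite /mul /=; under eq_integral do rewrite EFinM.
  by rewrite integralZl // EY.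
have /fineK <- : \int[P]_w (Y w)%:E \is a fin_num by exact: integrable_fin_num.
by rewrite integralZr // integral_distribution.
Qed.

Lemma rows_independent_pair {n r : nat} (eps : 'I_n -> 'I_r -> T -> R) i j c k :
  rows_independent P eps -> i != j ->
  forall A B, measurable A -> measurable B ->
  P (eps i c @^-1` A `&` eps j k @^-1` B) = P (eps i c @^-1` A) * P (eps j k @^-1` B).
Proof.
move=> indep ij A B mA mB.
(* Apply the product rule to the family equal to A at (i, c), to B at (j, k)
   and to the whole line elsewhere. *)
pose cyl (x0 : 'I_r) (S : set R) (x : 'I_r) := if x == x0 then S else setT.
have row i' x0 S : \bigcap_(c' in [set: 'I_r]) (eps i' c' @^-1` cyl x0 S c') = eps i' x0 @^-1` S.
  apply/seteqP; split => w; first by move=> /(_ x0 I); rewrite /cyl eqxx.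
  by move=> Sw c' _; rewrite /cyl; case: eqP => [->|].
pose F i' := if i' == i then cyl c A else if i' == j then cyl k B else cyl c setT.
have mF i' c' : measurable (F i' c') by rewrite /F /cyl; repeat case: ifP.
have rowF i' : \bigcap_(c' in [set: 'I_r]) (eps i' c' @^-1` F i' c') =
    if i' == i then eps i c @^-1` A else if i' == j then eps j k @^-1` B else setT.
  rewrite /F; case: eqP => [->|_]; first exact: row.
  by case: eqP => [->|_]; rewrite row.
have := indep F mF; rewrite (eq_bigcapr (fun i' _ => rowF i')).
under eq_bigr do rewrite rowF.
rewrite (bigD1 i) // (bigD1 j) 1?eq_sym //= !eqxx [j == i]eq_sym (negbTE ij) /=.
rewrite big1 ?mule1 => [<-|i' /andP[i'i i'j]]; last first.
  by rewrite (negbTE i'i) (negbTE i'j) probability_setT.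
congr (P _); apply/seteqP; split => [w [Aw Bw] i' _|w Hw].
  by case: eqP => // _; case: eqP.
split; first by have := Hw i I; rewrite eqxx.
by have := Hw j I; rewrite eqxx [j == i]eq_sym (negbTE ij).
Qed.

End independent_product.

Section finite_sums.
Local Open Scope ereal_scope.
Context d (T : measurableType d) (R : realType) (P : probability T R).

Lemma Lfun_fsum (p : \bar R) (I : Type) (s : seq I) (f : I -> T -> R) : 1 <= p ->
  (forall i, f i \in Lfun P p) -> (fun w => \sum_(i <- s) f i w)%R \in Lfun P p.
Proof.
move=> p1 Lf; have -> : (fun w => \sum_(i <- s) f i w)%R = (\sum_(i <- s) f i)%R.
  by apply/funext => w; rewrite fct_sumE.
by apply: rpred_sum => i _; exact: Lf.
Qed.

Lemma Lfun_scale_l (p : \bar R) (a : R) (f : T -> R) : 1 <= p ->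
  f \in Lfun P p -> (fun w => a * f w)%R \in Lfun P p.
Proof. by move=> p1; exact: rpredZ. Qed.

Lemma Lfun2_of_expectation_sqr (f : {RV P >-> R}) :
  'E_P[fun w => (f w ^+ 2)%R] \is a fin_num -> (f : T -> R) \in Lfun P 2%:E.
Proof.
move=> fin_sqr; rewrite inE; apply/andP; split; first by rewrite inE /=; exact: measurable_funPT.
rewrite inE /= /finite_norm; apply: (@lty_poweRy _ _ 2%R); first by rewrite pnatr_eq0.
rewrite powR_Lnorm; last by rewrite pnatr_eq0.
under eq_integral => x _ do
  rewrite /comp abse_EFin poweR_EFin powR_mulrn ?real_normK ?num_real //.
by move: fin_sqr; rewrite unlock => /fin_numP[_]; rewrite ltey.
Qed.

Lemma expectation_fsum (I : eqType) (s : seq I) (f : I -> T -> R) :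
  (forall i, f i \in Lfun P 1) ->
  'E_P[fun w => (\sum_(i <- s) f i w)%R] = \sum_(i <- s) 'E_P[f i].
Proof.
move=> Lf; have -> : (fun w => \sum_(i <- s) f i w)%R = (\sum_(g <- map f s) g)%R.
  by apply/funext => w; rewrite big_map fct_sumE.
rewrite expectation_sum ?big_map // => g /mapP[i _ ->]; exact: Lf.
Qed.

Lemma expectation_scale (a : R) (f : T -> R) :
  f \in Lfun P 1 -> 'E_P[fun w => (a * f w)%R] = a%:E * 'E_P[f].
Proof.
move=> Lf; rewrite -expectationZl //; congr 'E_P[_].
by apply/funext => w /=; rewrite mulrC.
Qed.

Lemma expectation_combine (f g h : T -> R) (a b c : R) :
  f \in Lfun P 1 -> g \in Lfun P 1 -> h \in Lfun P 1 ->
  'E_P[fun w => (f w - a * g w - b * h w + c)%R] =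
  'E_P[f] - a%:E * 'E_P[g] - b%:E * 'E_P[h] + c%:E.
Proof.
move=> Lf Lg Lh.
have Lag : (fun w => a * g w)%R \in Lfun P 1 by exact: Lfun_scale_l.
have Lbh : (fun w => b * h w)%R \in Lfun P 1 by exact: Lfun_scale_l.
rewrite (@expectationD _ _ _ P (fun w => f w - a * g w - b * h w)%R (cst c)).
- rewrite expectation_cst (@expectationB _ _ _ P (fun w => f w - a * g w)%R) //.
  + by rewrite expectationB // !expectation_scale.
  + exact: rpredB.
- by apply: rpredB => //; exact: rpredB.
- exact: Lfun_cst.
Qed.

End finite_sums.

Section noise.
Context {d} {T : measurableType d} {R : realType} {P : probability T R}.
Context {n r : nat}.
Variables (eps : 'I_n -> 'I_r -> {RV P >-> R}) (rho : R).
Hypothesis eps_indep : rows_independent P (fun i c => eps i c : T -> R).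
Hypothesis eps_mean0 : forall i c, ('E_P[eps i c] = 0)%E.
Hypothesis eps_var1 : forall i c, ('E_P[fun w => (eps i c w ^+ 2)%R] = 1)%E.
Hypothesis eps_cov : forall i c k, c != k ->
  ('E_P[fun w => (eps i c w * eps i k w)%R] = rho%:E)%E.

Definition noise (w : T) : 'M[R]_(n, r) := \matrix_(i < n, c < r) eps i c w.

Let le12 : (1 <= 2%:E :> \bar R)%E. Proof. by rewrite lee_fin ler1n. Qed.

Lemma eps_Lfun2 i c : (eps i c : T -> R) \in Lfun P 2%:E.
Proof. by apply: Lfun2_of_expectation_sqr; rewrite eps_var1. Qed.

Lemma eps_Lfun1 i c : (eps i c : T -> R) \in Lfun P 1.
Proof. exact: (Lfun_subset12 (fin_num_measure _ _ measurableT) (eps_Lfun2 i c)). Qed.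

Lemma expectation_eps_mul i c j k :
  ('E_P[fun w => (eps i c w * eps j k w)%R] =
   (if i == j then if c == k then 1 else rho else 0)%:E)%E.
Proof.
have [<-|ij] := eqVneq i j.
  have [<-|] := eqVneq c k; last exact: eps_cov.
  by under eq_fun do rewrite -expr2; exact: eps_var1.
rewrite expectation_mul_indep ?eps_mean0 ?mule0 ?eps_Lfun1 //.
  exact: rows_independent_pair eps_indep ij.
exact: Lfun2_mul_Lfun1 (eps_Lfun2 i c) (eps_Lfun2 j k).
Qed.

Lemma expectation_lincomb (a : 'M[R]_(n, r)) (X : 'I_n -> 'I_r -> T -> R) v :
  (forall i c, X i c \in Lfun P 1) -> (forall i c, 'E_P[X i c] = (v i c)%:E)%E ->
  ('E_P[fun w => (\sum_i \sum_c a i c * X i c w)%R] =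
   (\sum_i \sum_c a i c * v i c)%:E)%E.
Proof.
move=> LX EX; rewrite expectation_fsum => [|i]; last first.
  by apply: Lfun_fsum => // c; exact: Lfun_scale_l.
transitivity (\sum_i \sum_c (a i c * v i c)%:E)%E.
  apply: eq_bigr => i _; rewrite expectation_fsum => [|c]; last exact: Lfun_scale_l.
  by apply: eq_bigr => c _; rewrite expectation_scale // EX.
by under eq_bigr do rewrite sumEFin; rewrite sumEFin.
Qed.

Lemma mxdot_noise_Lfun2 a : (fun w => mxdot a (noise w)) \in Lfun P 2%:E.
Proof.
apply: Lfun_fsum => // i; apply: Lfun_fsum => // c.
under eq_fun do rewrite mxE; exact: Lfun_scale_l (eps_Lfun2 i c).
Qed.

Lemma expectation_mxdot_noise a : ('E_P[fun w => mxdot a (noise w)] = 0)%E.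
Proof.
rewrite /mxdot; under eq_fun do under eq_bigr do under eq_bigr do rewrite mxE.
rewrite (@expectation_lincomb a (fun i c => eps i c) (fun _ _ => 0)).
- by rewrite big1 // => i _; rewrite big1 // => c _; rewrite mulr0.
- exact: eps_Lfun1.
- exact: eps_mean0.
Qed.

Lemma expectation_eps_mxdot_noise a i c :
  ('E_P[fun w => (eps i c w * mxdot a (noise w))%R] =
   ((1 - rho) * a i c + rho * \sum_k a i k)%:E)%E.
Proof.
have -> : (fun w => eps i c w * mxdot a (noise w)) =
    (fun w => \sum_j \sum_k a j k * (eps i c w * eps j k w)).
  apply/funext => w; rewrite /mxdot mulr_sumr; apply: eq_bigr => j _.
  by rewrite mulr_sumr; apply: eq_bigr => k _; rewrite mxE mulrCA.
rewrite (expectation_lincomb _ _ _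
  (fun j k => Lfun2_mul_Lfun1 (eps_Lfun2 i c) (eps_Lfun2 j k))
  (fun j k => expectation_eps_mul i c j k)).
congr (_%:E); rewrite (bigD1 i) //= [X in _ + X]big1 => [|j ji]; last first.
  by apply: big1 => k _; rewrite [i == j]eq_sym (negbTE ji) mulr0.
rewrite addr0 eqxx (bigD1 c) //= eqxx mulr1 [in RHS](bigD1 c) //=.
under eq_bigr => k kc do rewrite [c == k]eq_sym (negbTE kc) mulrC.
rewrite -mulr_sumr; ring.
Qed.

Lemma expectation_mxdot_noise_sqr a :
  ('E_P[fun w => (mxdot a (noise w) ^+ 2)%R] =
   (\sum_i ((1 - rho) * \sum_c a i c ^+ 2 + rho * (\sum_c a i c) ^+ 2))%:E)%E.
Proof.
have -> : (fun w => mxdot a (noise w) ^+ 2) =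
    (fun w => \sum_i \sum_c a i c * (eps i c w * mxdot a (noise w))).
  apply/funext => w; rewrite expr2 {1}/mxdot mulr_suml; apply: eq_bigr => i _.
  by rewrite mulr_suml; apply: eq_bigr => c _; rewrite mxE mulrA.
rewrite (expectation_lincomb _ _ _
  (fun i c => Lfun2_mul_Lfun1 (eps_Lfun2 i c) (mxdot_noise_Lfun2 a))
  (expectation_eps_mxdot_noise a)).
congr (_%:E); apply: eq_bigr => i _.
under eq_bigr do rewrite mulrDr; rewrite big_split /=; congr (_ + _).
  by rewrite mulr_sumr; apply: eq_bigr => c _; ring.
by rewrite expr2 mulr_suml mulr_sumr; apply: eq_bigr => c _; ring.
Qed.

Lemma mulmx_noise_entry {p k} (F : 'M[R]_(p, n)) (G : 'M[R]_(r, k)) j c w :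
  (F *m noise w *m G) j c = mxdot (\matrix_(i, l) (F j i * G l c)) (noise w).
Proof.
rewrite /mxdot mxE [RHS]exchange_big /=; apply: eq_bigr => l _.
by rewrite mxE mulr_suml; apply: eq_bigr => i _; rewrite !mxE; ring.
Qed.

Lemma sqnorm_mulmx_noise_Lfun1 {p k} (F : 'M[R]_(p, n)) (G : 'M[R]_(r, k)) :
  (fun w => sqnorm (F *m noise w *m G)) \in Lfun P 1.
Proof.
apply: Lfun_fsum => // j; apply: Lfun_fsum => // c.
under eq_fun do rewrite expr2 mulmx_noise_entry.
exact: Lfun2_mul_Lfun1 (mxdot_noise_Lfun2 _) (mxdot_noise_Lfun2 _).
Qed.

Lemma mxdot_mulmx_noise_Lfun1 {p k} (F : 'M[R]_(p, n)) (G : 'M[R]_(r, k)) C :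
  (fun w => mxdot (F *m noise w *m G) C) \in Lfun P 1.
Proof.
under eq_fun do rewrite mxdot_mulmxr mxdot_mulmxl mxdotC.
by apply: (Lfun_subset12 (fin_num_measure _ _ measurableT)); exact: mxdot_noise_Lfun2.
Qed.

Lemma expectation_mxdot_mulmx_noise {p k} (F : 'M[R]_(p, n)) (G : 'M[R]_(r, k)) C :
  ('E_P[fun w => mxdot (F *m noise w *m G) C] = 0)%E.
Proof.
under eq_fun do rewrite mxdot_mulmxr mxdot_mulmxl mxdotC.
exact: expectation_mxdot_noise.
Qed.

Definition noise_energy {p k} (F : 'M[R]_(p, n)) (G : 'M[R]_(r, k)) : R :=
  sqnorm F * ((1 - rho) * sqnorm G + rho * \sum_c (\sum_l G l c) ^+ 2).

Lemma sum_rank_one_sqr (x : 'I_n -> R) (y : 'I_r -> R) :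
  \sum_i ((1 - rho) * \sum_l (x i * y l) ^+ 2 + rho * (\sum_l x i * y l) ^+ 2) =
  (\sum_i x i ^+ 2) * ((1 - rho) * \sum_l y l ^+ 2 + rho * (\sum_l y l) ^+ 2).
Proof.
rewrite mulr_suml; apply: eq_bigr => i _.
rewrite -mulr_sumr (eq_bigr (fun l => x i ^+ 2 * y l ^+ 2)) => [|l _]; last exact: exprMn.
by rewrite -mulr_sumr; ring.
Qed.

Lemma expectation_sqnorm_mulmx_noise {p k} (F : 'M[R]_(p, n)) (G : 'M[R]_(r, k)) :
  ('E_P[fun w => sqnorm (F *m noise w *m G)] = (noise_energy F G)%:E)%E.
Proof.
have entry_Lfun1 j c : (fun w => (F *m noise w *m G) j c ^+ 2) \in Lfun P 1.
  under eq_fun do rewrite expr2 mulmx_noise_entry.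
  exact: Lfun2_mul_Lfun1 (mxdot_noise_Lfun2 _) (mxdot_noise_Lfun2 _).
rewrite expectation_fsum => [|j]; last exact: Lfun_fsum.
transitivity (\sum_j \sum_c ((\sum_i F j i ^+ 2) *
    ((1 - rho) * \sum_l G l c ^+ 2 + rho * (\sum_l G l c) ^+ 2))%:E)%E.
  apply: eq_bigr => j _; rewrite expectation_fsum //; apply: eq_bigr => c _.
  under eq_fun do rewrite mulmx_noise_entry.
  rewrite expectation_mxdot_noise_sqr -sum_rank_one_sqr.
  congr (_%:E); apply: eq_bigr => i _.
  by congr (_ * _ + _ * _ ^+ 2); apply: eq_bigr => l _; rewrite mxE.
under eq_bigr do rewrite sumEFin; rewrite sumEFin; congr (_%:E).
rewrite /noise_energy /sqnorm mulr_suml; apply: eq_bigr => j _.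
by rewrite -mulr_sumr big_split /= -!mulr_sumr [\sum_c \sum_l _]exchange_big.
Qed.

Lemma expectation_sqnorm_shrink_err {p} (M : 'M[R]_(p, n)) (K : 'M[R]_r) (C : 'M[R]_(p, r)) t :
  K^T = K -> K *m K = K ->
  ('E_P[fun w => sqnorm ((C + M *m noise w) *m (1%:M - t *: K) - C)] =
   (noise_energy M 1%:M - (2 * t - t ^+ 2) * noise_energy M K
    + t ^+ 2 * sqnorm (C *m K))%:E)%E.
Proof.
move=> symK idemK.
have -> : (fun w => sqnorm ((C + M *m noise w) *m (1%:M - t *: K) - C)) =
    (fun w => sqnorm (M *m noise w *m 1%:M) - (2 * t - t ^+ 2) * sqnorm (M *m noise w *m K)
      - (2 * t - 2 * t ^+ 2) * mxdot (M *m noise w *m K) (C *m K) + t ^+ 2 * sqnorm (C *m K)).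
  by apply/funext => w; rewrite mulmx1 sqnorm_shrink_err.
rewrite expectation_combine ?sqnorm_mulmx_noise_Lfun1 ?mxdot_mulmx_noise_Lfun1 //.
rewrite !expectation_sqnorm_mulmx_noise expectation_mxdot_mulmx_noise mule0 sube0.
by rewrite -EFinM -EFinB -EFinD.
Qed.

End noise.

Lemma noise_energy_ge0 {R : realType} {n r p k} (rho : R) (F : 'M[R]_(p, n)) (G : 'M[R]_(r, k)) :
  0 <= rho -> rho <= 1 -> 0 <= noise_energy rho F G.
Proof.
move=> rho_ge0 rho_le1; apply: mulr_ge0; first exact: sqnorm_ge0.
apply: addr_ge0; apply: mulr_ge0; rewrite ?subr_ge0 ?sqnorm_ge0 //.
by apply: sumr_ge0 => c _; exact: sqr_ge0.
Qed.

Lemma noise_energy_gt0 {R : realType} {n r p k} (rho : R) (F : 'M[R]_(p, n)) (G : 'M[R]_(r, k)) :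
  0 < rho -> rho < 1 -> F != 0 -> G != 0 -> 0 < noise_energy rho F G.
Proof.
move=> rho_gt0 rho_lt1 F0 G0; apply: mulr_gt0; first exact: sqnorm_gt0.
apply: ltr_wpDr; first by apply: mulr_ge0; [exact: ltW | apply: sumr_ge0 => c _; exact: sqr_ge0].
by apply: mulr_gt0; [rewrite subr_gt0 | exact: sqnorm_gt0].
Qed.

Lemma exists_shrink_gamma {R : realType} {V b : R} :
  0 <= V -> 0 <= b -> (0 < b -> 0 < V) ->
  exists2 g, 0 < g &
    shrink_weight g ^+ 2 * b <= (2 * shrink_weight g - shrink_weight g ^+ 2) * V.
Proof.
move=> V_ge0 b_ge0 V_gt0.
have key g : 0 < g -> shrink_weight g * b <= V ->
    shrink_weight g ^+ 2 * b <= (2 * shrink_weight g - shrink_weight g ^+ 2) * V.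
  move=> g_gt0 tb_le; set t := shrink_weight g in tb_le *.
  have t_ge0 : 0 <= t := shrink_weight_ge0 (ltW g_gt0).
  have t_le1 : t <= 1 := shrink_weight_le1 (ltW g_gt0).
  have : t ^+ 2 * b <= t * V by rewrite expr2 -mulrA ler_wpM2l.
  have : 0 <= (t - t ^+ 2) * V by rewrite mulr_ge0 // subr_ge0 expr2 ler_piMr.
  lra.
have [b0|b_gt0] := eqVneq b 0.
  by exists 1 => //; apply: key => //; rewrite b0 mulr0.
have {b_gt0} b_gt0 : 0 < b by rewrite lt_def b_gt0.
have g_gt0 : 0 < V / (2 * b) by rewrite divr_gt0 ?mulr_gt0 ?V_gt0.
exists (V / (2 * b)) => //; apply: key => //.
apply: le_trans (ler_wpM2r b_ge0 (shrink_weight_le (ltW g_gt0))) _.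
suff -> : 2 * (V / (2 * b)) * b = V by [].
by field; rewrite gt_eqF.
Qed.

Theorem theorem2 (R : realType) (d : measure_display) (T : measurableType d)
  (P : probability T R) (n p r : nat) (X : 'M[R]_(n, p)) (Bstar : 'M[R]_(p, r))
  (eps : 'I_n -> 'I_r -> {RV P >-> R}) (rho : R) (D : {set {set 'I_r}}) :
  (p < n)%N ->
  X^T *m X \in unitmx ->
  0 < rho < 1 ->
  rows_independent P (fun i c => eps i c : T -> R) ->
  rows_identically_distributed P (fun i c => eps i c : T -> R) ->
  (forall i c, ('E_P[eps i c] = 0)%E) ->
  (forall i c, ('E_P[fun w => (eps i c w ^+ 2)%R] = 1)%E) ->
  (forall i c k, c != k -> ('E_P[fun w => (eps i c w * eps i k w)%R] = rho%:E)%E) ->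
  finset.partition D [set: 'I_r]%SET ->
  let Y := fun w : T => X *m Bstar + \matrix_(i < n, c < r) eps i c w in
  exists gamma : R, 0 < gamma /\
    forall Bbar : T -> 'M[R]_(p, r),
      (forall w, is_minimizer D gamma X (Y w) (Bbar w)) ->
      ('E_P[fun w => sqnorm (Bbar w - Bstar)]
        <= 'E_P[fun w => sqnorm (ols X (Y w) - Bstar)])%E.
Proof.
move=> p_lt_n XtX_unit /andP[rho_gt0 rho_lt1] indep _ mean0 var1 cov partD Y.
have n_gt0 : (0 < n)%N by exact: leq_ltn_trans p_lt_n.
pose M := invmx (X^T *m X) *m X^T; pose K : 'M[R]_r := block_center_mx D.
have MX : M *m X = 1%:M by rewrite -mulmxA mulVmx.
have olsE w : ols X (Y w) = Bstar + M *m noise eps w by exact: ols_linear_model.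
have risk_ols : ('E_P[fun w => sqnorm (ols X (Y w) - Bstar)] =
    (noise_energy rho M (1%:M : 'M[R]_r))%:E)%E.
  rewrite -(expectation_sqnorm_mulmx_noise _ _ indep mean0 var1 cov M (1%:M : 'M[R]_r)).
  by congr (expectation P _); apply/funext => w; rewrite olsE addrC addKr mulmx1.
have V_gt0 : 0 < sqnorm (Bstar *m K) -> 0 < noise_energy rho M K.
  rewrite lt_def sqnorm_eq0 sqnorm_ge0 andbT => BK0.
  apply: noise_energy_gt0 => //.
    by apply: contraNneq BK0 => M0; rewrite -[Bstar]mul1mx -MX M0 !mul0mx.
  by apply: contraNneq BK0 => ->; rewrite mulmx0.
have [g g_gt0 g_ok] := exists_shrink_gamma
  (noise_energy_ge0 rho M K (ltW rho_gt0) (ltW rho_lt1)) (sqnorm_ge0 (Bstar *m K)) V_gt0.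
exists g; split => // Bbar minB.
under eq_fun do rewrite (is_minimizer_shrink partD XtX_unit (ltW g_gt0) _ n_gt0 (minB _)).
under eq_fun do rewrite olsE /shrink_mx.
rewrite (expectation_sqnorm_shrink_err _ _ indep mean0 var1 cov) ?risk_ols ?lee_fin.
- lra.
- exact: trmx_block_center.
- exact: block_center_mx_idem.
Qed.
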